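(* Let $d\ge3$ be an integer and $0<\beta<\beta_{\mathrm{KS}}=\log\left(\frac{\sqrt{d-1}+1}{\sqrt{d-1}-1}\right)$. For $\alpha\in(-1,1)$ let $z=\sqrt{(1+e^{-2\beta})^2-\alpha^2(1-e^{-2\beta})^2}$, \begin{align*} G(\alpha,\beta)&=2\log2-\log\big((1+e^{-2\beta})(1-e^{-2\beta})^2\big)-(1+\alpha)\log(1+\alpha)-(1-\alpha)\log(1-\alpha)\\ &\quad+\frac{1+\alpha}{2}\log\Big((1+e^{-2\beta})^2+\alpha(1-e^{-2\beta})^2-2e^{-\beta}z\Big)+\frac{1-\alpha}{2}\log\Big((1+e^{-2\beta})^2-\alpha(1-e^{-2\beta})^2-2e^{-\beta}z\Big), \end{align*} and \[ f_d(\alpha,\beta)=\log2+H\!\left(\frac{1+\alpha}{2}\right)-\frac d2\,G(\alpha,\beta), \] where $H(p)=-p\log p-(1-p)\log(1-p)$. Then $\arg\max_{-1<\alpha<1}f_d(\alpha,\beta)=0$. *)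

From Stdlib Require Import Reals.
Open Scope R_scope.

Definition beta_KS (d : nat) : R :=
  ln ((sqrt (INR d - 1) + 1) / (sqrt (INR d - 1) - 1)).

Definition Hent (p : R) : R := - p * ln p - (1 - p) * ln (1 - p).

Definition zfun (a b : R) : R :=
  sqrt ((1 + exp (-2*b))^2 - a^2 * (1 - exp (-2*b))^2).

Definition Gfun (a b : R) : R :=
  2 * ln 2
  - ln ((1 + exp (-2*b)) * (1 - exp (-2*b))^2)
  - (1 + a) * ln (1 + a) - (1 - a) * ln (1 - a)
  + (1 + a) / 2 * ln ((1 + exp (-2*b))^2 + a * (1 - exp (-2*b))^2
                      - 2 * exp (- b) * zfun a b)
  + (1 - a) / 2 * ln ((1 + exp (-2*b))^2 - a * (1 - exp (-2*b))^2
                      - 2 * exp (- b) * zfun a b).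

Definition f_d (d : nat) (a b : R) : R :=
  ln 2 + Hent ((1 + a) / 2) - INR d / 2 * Gfun a b.

From Stdlib Require Import Reals Lra Lia.
From Coquelicot Require Import Coquelicot.
Open Scope R_scope.

(* Put t = exp (- beta) and U x = sqrt ((1 + x) + t^2 (1 - x)).  Then z = U x U (-x) and the
   arguments of the logarithms in G are the squares (U x - t U (-x))^2 and (U (-x) - t U x)^2, so
   up to a constant f_d is F = (d - 1)/2 negent - d/2 Q, where Q x = (1 + x) g x + (1 - x) g (-x)
   and g x = log (U x - t U (-x)).  Since (1 + x) g' x = 1/2 + t / (U x U (-x)) is even,
   Q' = phi := g - g (- _), and phi' >= kappa log_odds' with kappa = (1 + t)^2 / (2 (1 + t^2))
   because U x U (-x) <= 1 + t^2.  As phi and log_odds vanish at 0, this gives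
   x F' x <= x log_odds x (d - 1 - d kappa) / 2 < 0 for x <> 0, the last inequality being
   exactly beta < beta_KS. *)
Lemma MVT_open (f df : R -> R) (a b x y : R) :
  (forall z, a < z < b -> is_derive f z (df z)) -> a < x -> x < y -> y < b ->
  exists z, x < z < y /\ f y - f x = df z * (y - x).
Proof.
  intros Hf Hax Hxy Hyb.
  destruct (MVT_cor2 f df x y Hxy) as (z & Hz & Hzxy).
  - intros z Hz. apply is_derive_Reals, Hf. lra.
  - exists z. split; assumption.
Qed.

Lemma mul_sub_ge0_of_derive_ge0 (f df : R -> R) (a b : R) :
  (forall z, a < z < b -> is_derive f z (df z)) -> (forall z, a < z < b -> 0 <= df z) ->
  forall x c, a < x < b -> a < c < b -> 0 <= (x - c) * (f x - f c).
Proof.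
  intros Hf Hdf x c Hx Hc.
  destruct (Rtotal_order x c) as [Hlt | [-> | Hgt]].
  - destruct (MVT_open f df a b x c Hf ltac:(lra) Hlt ltac:(lra)) as (z & Hz & E).
    replace ((x - c) * (f x - f c)) with ((c - x) * (f c - f x)) by ring.
    rewrite E. pose proof (Hdf z ltac:(lra)). apply Rmult_le_pos; [| apply Rmult_le_pos]; lra.
  - lra.
  - destruct (MVT_open f df a b c x Hf ltac:(lra) Hgt ltac:(lra)) as (z & Hz & E).
    rewrite E. pose proof (Hdf z ltac:(lra)). apply Rmult_le_pos; [| apply Rmult_le_pos]; lra.
Qed.

Lemma strict_max_of_derive_sign (f df : R -> R) (a b c : R) : a < c < b ->
  (forall z, a < z < b -> is_derive f z (df z)) ->
  (forall z, a < z < b -> z <> c -> (z - c) * df z < 0) ->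
  forall y, a < y < b -> y <> c -> f y < f c.
Proof.
  intros Hc Hf Hdf y Hy Hyc.
  destruct (Rtotal_order y c) as [Hlt | [-> | Hgt]].
  - destruct (MVT_open f df a b y c Hf ltac:(lra) Hlt ltac:(lra)) as (z & Hz & E).
    pose proof (Hdf z ltac:(lra) ltac:(lra)).
    assert (0 < df z) by nra.
    assert (0 < df z * (c - y)) by (apply Rmult_lt_0_compat; lra).
    lra.
  - contradiction.
  - destruct (MVT_open f df a b c y Hf ltac:(lra) Hgt ltac:(lra)) as (z & Hz & E).
    pose proof (Hdf z ltac:(lra) ltac:(lra)).
    assert (df z < 0) by nra.
    assert (0 < - df z * (y - c)) by (apply Rmult_lt_0_compat; lra).
    lra.
Qed.

Definition log_odds (x : R) := ln (1 + x) - ln (1 - x).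
Definition negent (x : R) := (1 + x) * ln (1 + x) + (1 - x) * ln (1 - x).

Lemma is_derive_negent x : -1 < x < 1 -> is_derive negent x (log_odds x).
Proof. intros Hx. unfold negent, log_odds. auto_derive; [lra | unfold Rminus; field; lra]. Qed.

Lemma is_derive_log_odds x : -1 < x < 1 -> is_derive log_odds x (/ (1 + x) + / (1 - x)).
Proof. intros Hx. unfold log_odds. auto_derive; [lra | unfold Rminus; field; lra]. Qed.

Lemma log_odds0 : log_odds 0 = 0.
Proof. unfold log_odds. rewrite Rplus_0_r, Rminus_0_r. ring. Qed.

Lemma log_odds_mul_pos x : -1 < x < 1 -> x <> 0 -> 0 < x * log_odds x.
Proof.
  intros Hx Hx0. unfold log_odds.
  destruct (Rtotal_order x 0) as [Hlt | [-> | Hgt]].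
  - assert (ln (1 + x) < ln (1 - x)) by (apply ln_increasing; lra). nra.
  - contradiction.
  - assert (ln (1 - x) < ln (1 + x)) by (apply ln_increasing; lra). nra.
Qed.

Section FreeEnergy.

Variable t : R.

Definition U (x : R) := sqrt (1 + x + t^2 * (1 - x)).
Definition P (x : R) := U x * U (-x).

Lemma U_sqr x : -1 < x < 1 -> U x ^ 2 = 1 + x + t^2 * (1 - x).
Proof. intros Hx. apply pow2_sqrt. pose proof (pow2_ge_0 t). nra. Qed.

Lemma U_pos x : -1 < x < 1 -> 0 < U x.
Proof. intros Hx. apply sqrt_lt_R0. pose proof (pow2_ge_0 t). nra. Qed.

Lemma P_pos x : -1 < x < 1 -> 0 < P x.
Proof. intros Hx. apply Rmult_lt_0_compat; apply U_pos; lra. Qed.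

Lemma P_opp x : P (-x) = P x.
Proof. unfold P. rewrite Ropp_involutive. ring. Qed.

Lemma P_sqr x : -1 < x < 1 -> P x ^ 2 = (1 + t^2)^2 - x^2 * (1 - t^2)^2.
Proof. intros Hx. unfold P. ring [(U_sqr x Hx) (U_sqr (-x) ltac:(lra))]. Qed.

Lemma P_le x : -1 < x < 1 -> P x <= 1 + t^2.
Proof.
  intros Hx. pose proof (P_pos x Hx). pose proof (P_sqr x Hx).
  assert (0 <= x^2 * (1 - t^2)^2) by (apply Rmult_le_pos; apply pow2_ge_0).
  pose proof (pow2_ge_0 t).
  nra.
Qed.

Lemma is_derive_U_sub x : -1 < x < 1 ->
  is_derive (fun y => U y - t * U (-y)) x ((1 - t^2) * (U (-x) + t * U x) / (2 * P x)).
Proof.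
  intros Hx. pose proof (U_pos x Hx). pose proof (U_pos (-x) ltac:(lra)).
  unfold P, U in *. auto_derive.
  - pose proof (pow2_ge_0 t). cbn [pow] in *. nra.
  - unfold Rminus in *; cbn [pow] in *. field. lra.
Qed.

Definition kappa := (1 + t)^2 / (2 * (1 + t^2)).

Lemma lt_mul_kappa d : (d - 1) * (1 - t)^2 < (1 + t)^2 -> d - 1 < d * kappa.
Proof.
  intros H.
  assert (E : d * kappa - (d - 1) = ((1 + t)^2 - (d - 1) * (1 - t)^2) / (2 * (1 + t^2)))
    by (unfold kappa; field; nra).
  assert (0 < ((1 + t)^2 - (d - 1) * (1 - t)^2) / (2 * (1 + t^2)))
    by (apply Rdiv_lt_0_compat; nra).
  lra.
Qed.

Hypothesis t_01 : 0 < t < 1.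

Lemma U_sub_pos x : -1 < x < 1 -> 0 < U x - t * U (-x).
Proof.
  intros Hx.
  pose proof (U_pos x Hx). pose proof (U_pos (-x) ltac:(lra)).
  assert (Hdiff : (U x - t * U (-x)) * (U x + t * U (-x)) = (1 + x) * ((1 - t^2) * (1 + t^2))).
  { ring [(U_sqr x Hx) (U_sqr (-x) ltac:(lra))]. }
  apply (Rmult_lt_reg_r (U x + t * U (-x))); [nra |].
  rewrite Rmult_0_l, Hdiff. apply Rmult_lt_0_compat; [lra | apply Rmult_lt_0_compat; nra].
Qed.

Definition g (x : R) := ln (U x - t * U (-x)).
Definition phi (x : R) := g x - g (-x).
Definition Q (x : R) := (1 + x) * g x + (1 - x) * g (-x).
Definition F (d x : R) := (d - 1) / 2 * negent x - d / 2 * Q x.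

Lemma is_derive_g x : -1 < x < 1 -> is_derive g x ((1/2 + t / P x) / (1 + x)).
Proof.
  intros Hx.
  pose proof (U_pos x Hx). pose proof (U_pos (-x) ltac:(lra)). pose proof (U_sub_pos x Hx).
  pose proof (U_sqr x Hx) as Ux. pose proof (U_sqr (-x) ltac:(lra)) as Vx.
  pose proof (is_derive_comp ln _ x _ _ (is_derive_ln _ H1) (is_derive_U_sub x Hx)) as Hd.
  replace ((1/2 + t / P x) / (1 + x))
    with (scal ((1 - t^2) * (U (-x) + t * U x) / (2 * P x)) (/ (U x - t * U (-x)))).
  - exact Hd.
  - unfold scal, P; simpl. unfold mult; simpl.
    field [Ux Vx]. lra.
Qed.

Lemma is_derive_phi x : -1 < x < 1 ->
  is_derive phi x ((1/2 + t / P x) * (/ (1 + x) + / (1 - x))).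
Proof.
  intros Hx.
  pose proof (is_derive_g x Hx) as Dg. pose proof (is_derive_g (-x) ltac:(lra)) as Dgo.
  pose proof (P_pos x Hx).
  unfold phi. auto_derive.
  - repeat split; eexists; eassumption.
  - change (fun y => g y) with g.
    rewrite (is_derive_unique _ _ _ Dg), (is_derive_unique _ _ _ Dgo), P_opp.
    field. lra.
Qed.

Lemma is_derive_Q x : -1 < x < 1 -> is_derive Q x (phi x).
Proof.
  intros Hx.
  pose proof (is_derive_g x Hx) as Dg. pose proof (is_derive_g (-x) ltac:(lra)) as Dgo.
  pose proof (P_pos x Hx).
  unfold Q. auto_derive.
  - repeat split; eexists; eassumption.
  - change (fun y => g y) with g.
    rewrite (is_derive_unique _ _ _ Dg), (is_derive_unique _ _ _ Dgo), P_opp.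
    unfold phi. field. lra.
Qed.

Lemma phi0 : phi 0 = 0.
Proof. unfold phi. rewrite Ropp_0. ring. Qed.

Lemma kappa_log_odds_le_phi x : -1 < x < 1 -> kappa * (x * log_odds x) <= x * phi x.
Proof.
  intros Hx.
  assert (Hmono : forall z, -1 < z < 1 -> 0 <= (1/2 + t / P z - kappa) * (/ (1 + z) + / (1 - z))).
  { intros z Hz. pose proof (P_pos z Hz). pose proof (P_le z Hz).
    apply Rmult_le_pos.
    - replace (1/2 + t / P z - kappa) with (t * (/ P z - / (1 + t^2))) by (unfold kappa; field; nra).
      assert (/ (1 + t^2) <= / P z) by (apply Rinv_le_contravar; lra).
      apply Rmult_le_pos; lra.
    - apply Rplus_le_le_0_compat; left; apply Rinv_0_lt_compat; lra. }
  assert (Hd : forall z, -1 < z < 1 -> is_derive (fun y => phi y - kappa * log_odds y) z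
                 ((1/2 + t / P z - kappa) * (/ (1 + z) + / (1 - z)))).
  { intros z Hz.
    pose proof (is_derive_phi z Hz) as Dphi. pose proof (is_derive_log_odds z Hz) as Dl.
    auto_derive.
    - repeat split; eexists; eassumption.
    - change (fun y => phi y) with phi. change (fun y => log_odds y) with log_odds.
      rewrite (is_derive_unique _ _ _ Dphi), (is_derive_unique _ _ _ Dl). ring. }
  pose proof (mul_sub_ge0_of_derive_ge0 _ _ (-1) 1 Hd Hmono x 0 Hx ltac:(lra)) as H.
  cbn beta in H. rewrite phi0, log_odds0 in H. nra.
Qed.

Lemma is_derive_F d x : -1 < x < 1 ->
  is_derive (F d) x ((d - 1) / 2 * log_odds x - d / 2 * phi x).
Proof.
  intros Hx.
  pose proof (is_derive_negent x Hx) as Dn. pose proof (is_derive_Q x Hx) as DQ.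
  unfold F. auto_derive.
  - repeat split; eexists; eassumption.
  - change (fun y => negent y) with negent. change (fun y => Q y) with Q.
    rewrite (is_derive_unique _ _ _ Dn), (is_derive_unique _ _ _ DQ). ring.
Qed.

Lemma F_derive_sign d x : 0 <= d -> d - 1 < d * kappa -> -1 < x < 1 -> x <> 0 ->
  x * ((d - 1) / 2 * log_odds x - d / 2 * phi x) < 0.
Proof.
  intros Hd Hdk Hx Hx0.
  pose proof (kappa_log_odds_le_phi x Hx). pose proof (log_odds_mul_pos x Hx Hx0).
  assert (0 < x * log_odds x * (d * kappa - (d - 1))) by (apply Rmult_lt_0_compat; lra).
  assert (0 <= d * (x * phi x - kappa * (x * log_odds x))) by (apply Rmult_le_pos; lra).
  lra.
Qed.

Lemma F_strict_max d a : 0 <= d -> d - 1 < d * kappa -> -1 < a < 1 -> a <> 0 -> F d a < F d 0.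
Proof.
  intros Hd Hdk.
  apply (strict_max_of_derive_sign _ _ (-1) 1 0 ltac:(lra) (is_derive_F d)).
  intros z Hz Hz0. rewrite Rminus_0_r. apply F_derive_sign; assumption.
Qed.

End FreeEnergy.

Lemma exp_opp_in_01 b : 0 < b -> 0 < exp (- b) < 1.
Proof. intros Hb. split; [apply exp_pos | rewrite <- exp_0; apply exp_increasing; lra]. Qed.

Lemma f_d_eq_F (d : nat) b : 0 < b ->
  exists C, forall a, -1 < a < 1 -> f_d d a b = C + F (exp (- b)) (INR d) a.
Proof.
  intros Hb. pose proof (exp_opp_in_01 b Hb) as Ht.
  set (t := exp (- b)) in *.
  assert (E2 : exp (-2 * b) = t^2).
  { unfold t. replace (-2 * b) with (- b + - b) by ring. rewrite exp_plus. ring. }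
  exists (2 * ln 2 - INR d / 2 * (2 * ln 2 - ln ((1 + t^2) * (1 - t^2)^2))).
  intros a Ha.
  pose proof (U_sqr t a Ha) as Ua. pose proof (U_sqr t (-a) ltac:(lra)) as Va.
  pose proof (U_sub_pos t Ht a Ha). pose proof (U_sub_pos t Ht (-a) ltac:(lra)).
  rewrite Ropp_involutive in *.
  assert (Hz : zfun a b = P t a).
  { unfold zfun. rewrite E2, <- P_sqr by assumption. apply sqrt_pow2. left; apply P_pos; assumption. }
  assert (Hp : (1 + t^2)^2 + a * (1 - t^2)^2 - 2 * t * P t a = (U t a - t * U t (-a))^2)
    by (unfold P; ring [Ua Va]).
  assert (Hm : (1 + t^2)^2 - a * (1 - t^2)^2 - 2 * t * P t a = (U t (-a) - t * U t a)^2)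
    by (unfold P; ring [Ua Va]).
  unfold f_d, Gfun, Hent, F, Q, negent, g.
  fold t. rewrite E2, Hz, Hp, Hm, Ropp_involutive, !ln_pow by assumption.
  replace (1 - (1 + a) / 2) with ((1 - a) / 2) by field.
  rewrite !ln_div by lra.
  simpl INR. field.
Qed.

Lemma lt_beta_KS (d : nat) beta : (3 <= d)%nat -> 0 < beta -> beta < beta_KS d ->
  (INR d - 1) * (1 - exp (- beta))^2 < (1 + exp (- beta))^2.
Proof.
  intros Hd Hb Hks.
  assert (Hd3 : 3 <= INR d) by (replace 3 with (INR 3) by (simpl; ring); apply le_INR; lia).
  pose proof (exp_opp_in_01 beta Hb) as Ht.
  set (m := sqrt (INR d - 1)).
  assert (Hm2 : m * m = INR d - 1) by (apply sqrt_sqrt; lra).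
  assert (Hm0 : 0 <= m) by apply sqrt_pos.
  assert (Hm1 : 1 < m) by nra.
  assert (He : exp beta < (m + 1) / (m - 1)).
  { rewrite <- (exp_ln ((m + 1) / (m - 1))) by (apply Rdiv_lt_0_compat; lra).
    apply exp_increasing. exact Hks. }
  assert (Hinv : exp (- beta) * exp beta = 1) by (rewrite <- exp_plus, Rplus_opp_l; apply exp_0).
  set (t := exp (- beta)) in *.
  assert (Hlin : m * (1 - t) < 1 + t).
  { apply (Rmult_lt_compat_r ((m - 1) * t)) in He; [| nra].
    replace ((m + 1) / (m - 1) * ((m - 1) * t)) with ((m + 1) * t) in He by (field; lra).
    replace (exp beta * ((m - 1) * t)) with ((m - 1) * (t * exp beta)) in He by ring.
    rewrite Hinv in He. lra. }
  rewrite <- Hm2. replace (m * m * (1 - t)^2) with ((m * (1 - t))^2) by ring.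
  assert (0 <= m * (1 - t)) by (apply Rmult_le_pos; lra).
  nra.
Qed.

Theorem lemma8p3 (d : nat) (beta : R) :
  (3 <= d)%nat -> 0 < beta -> beta < beta_KS d ->
  forall a : R, -1 < a < 1 -> a <> 0 -> f_d d a beta < f_d d 0 beta.
Proof.
  intros Hd Hb Hks a Ha Ha0.
  pose proof (exp_opp_in_01 beta Hb) as Ht.
  destruct (f_d_eq_F d beta Hb) as (C & HC).
  rewrite (HC a Ha), (HC 0 ltac:(lra)).
  apply Rplus_lt_compat_l, F_strict_max; try assumption.
  - apply pos_INR.
  - apply lt_mul_kappa, lt_beta_KS; assumption.
Qed.
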